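(* Let $V$ be a finite set with $n:=|V|$, and let $E^+,E^-\subseteq\binom{V}{2}$. Set \[ \mathcal{C}:=\{X\in\mathbb{S}^V_+ : \operatorname{tr}(X)=1,\ X_{ij}\ge 0\ \forall ij\in E^+,\ X_{ij}\le 0\ \forall ij\in E^-\} \] and let $H:=(V,E^+\cup E^-)$. Then the set of vertices of $\mathcal{C}$ is $\{e_ke_k^{\mathsf T} : k\in V,\ \deg_H(k)=n-1\}$.
   Context: $\mathbb{S}^V_+$ denotes the real symmetric positive semidefinite matrices indexed by $V$, with trace inner product; $e_k$ are standard basis vectors of $\mathbb{R}^V$; $\deg_H(k)$ is the degree of $k$ in the graph $H$. For a convex set $\mathcal{C}$ in a finite-dimensional space $\mathbb{E}$ and $\bar x\in\mathcal{C}$, the normal cone is $N_{\mathcal{C}}(\bar x):=\{c : \langle c,x\rangle\le\langle c,\bar x\rangle\ \forall x\in\mathcal{C}\}$; $\bar x$ is a vertex if $\dim N_{\mathcal{C}}(\bar x)=\dim\mathbb{E}$ (here $\mathbb{E}=\mathbb{S}^V$). *)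

From HB Require Import structures.
From mathcomp Require Import all_boot all_order all_algebra.
From mathcomp Require Import boolp classical_sets reals.
Set Implicit Arguments. Unset Strict Implicit. Unset Printing Implicit Defensive.
Import Order.TTheory GRing.Theory Num.Theory.
Local Open Scope ring_scope.

Section Defs.
Variables (R : realType) (n : nat).
Local Notation M := 'M[R]_n.

Definition symmx : set M := fun X => X^T = X.

Definition psdmx : set M :=
  fun X => symmx X /\ forall v : 'cV[R]_n, 0 <= (v^T *m X *m v) 0 0.

Definition trip (A B : M) : R := \tr (A^T *m B).

Definition evec (k : 'I_n) : 'cV[R]_n := delta_mx k 0.

(* the spectrahedron C of the statement; an unordered pair ij is [set i; j] *)
Definition Cset (Ep Em : {set {set 'I_n}}) : set M :=
  fun X => psdmx X /\ \tr X = 1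
        /\ (forall i j : 'I_n, [set i; j] \in Ep -> 0 <= X i j)
        /\ (forall i j : 'I_n, [set i; j] \in Em -> X i j <= 0).

Definition normal_cone (E C : set M) (xbar : M) : set M :=
  fun c => E c /\ forall x, C x -> trip c x <= trip c xbar.

Definition has_aff_indep (A : set M) (k : nat) : Prop :=
  exists p : 'I_k.+1 -> M, (forall i, A (p i)) /\
    row_free (\matrix_(i < k) mxvec (p (lift ord0 i) - p ord0)).

(* dimension of a (nonempty) set = dimension of its affine hull
   = max number k such that it contains k+1 affinely independent points
   (at most n*n, as these live in 'M_n). *)
Definition aff_dim (A : set M) : nat :=
  \max_(k < (n * n).+1 | `[< has_aff_indep A k >]) k.

Definition is_vertex (E C : set M) (xbar : M) : Prop :=
  C xbar /\ aff_dim (normal_cone E C xbar) = aff_dim E.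

End Defs.

Definition deg (n : nat) (E : {set {set 'I_n}}) (k : 'I_n) : nat :=
  #|[set e in E | k \in e]|.

(* X is a vertex iff its normal cone N(X) is full-dimensional in S^V.  If N(X) is orthogonal
   to some nonzero D in S^V, it lies in a hyperplane and X is not a vertex.  Such a D = L - tr(L) X
   arises from any curve X + t L + t^2 Q that stays in C after normalizing its trace: the linear
   term of <c, .> along the curve must vanish for c in N(X).  Two positive diagonal entries give
   the curve diag(s_t) X diag(s_t), so a vertex must be some e_k e_k^T; a non-neighbour j of k
   gives the curve (e_k + t e_j)(e_k + t e_j)^T.  Conversely, when k is adjacent to every other
   vertex, an explicit matrix with a very negative diagonal away from k and row k signed against
   the edge constraints lies, with a whole ball around it, in N(e_k e_k^T). *)

From HB Require Import structures.
From mathcomp Require Import all_boot all_order all_algebra.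
From mathcomp Require Import boolp classical_sets reals.
From mathcomp Require Import ring lra.
Import Order.TTheory GRing.Theory Num.Theory.
Local Open Scope ring_scope.
Set Implicit Arguments. Unset Strict Implicit. Unset Printing Implicit Defensive.

Lemma sumr_ge_term (R : numDomainType) (I : finType) (F : I -> R) a :
  (forall i, 0 <= F i) -> F a <= \sum_i F i.
Proof. by move=> F_ge0; rewrite (bigD1 a) //= lerDl sumr_ge0. Qed.

Lemma sum_offdiag_le (R : numDomainType) n (F : 'I_n -> 'I_n -> R) B :
  0 <= B -> (forall a b, a != b -> F a b <= B) ->
  \sum_a \sum_b F a b <= \sum_a F a a + n%:R ^+ 2 * B.
Proof.
move=> B_ge0 FB.
have sum_B : \sum_(b : 'I_n) B = n%:R * B by rewrite sumr_const card_ord mulr_natl.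
have row_le a : \sum_b F a b <= F a a + n%:R * B.
  rewrite (bigD1 a) //= lerD2l -sum_B big_mkcond /=.
  by apply: ler_sum => b _; case: eqP => [_ //|/eqP ba]; apply: FB; rewrite eq_sym.
apply: le_trans (ler_sum _ (fun a _ => row_le a)) _.
by rewrite big_split /= sumr_const card_ord expr2 -mulrA !mulr_natl.
Qed.

Lemma linear_coef_eq0 (R : realFieldType) (g h : R) :
  (forall t, -1 < t < 1 -> t * g + t ^+ 2 * h <= 0) -> g = 0.
Proof.
move=> gh_le0; case: (eqVneq g 0) => // g_neq0; exfalso.
have h_ge0 := normr_ge0 h; have g_ge0 := normr_ge0 g.
(* at t := s g the left-hand side is s g^2 (1 + s h) > 0 *)
pose s := (`|h| + `|g| + 1)^-1.
have s_gt0 : 0 < s by rewrite invr_gt0; lra.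
have s_def : s * (`|h| + `|g| + 1) = 1 by rewrite mulVf //; lra.
have /andP[hl hr] : - `|h| <= h <= `|h| by rewrite -ler_norml.
have /andP[gl gr] : - `|g| <= g <= `|g| by rewrite -ler_norml.
have /gh_le0 le0 : -1 < s * g < 1 by apply/andP; split; nra.
suff : 0 < s * g * g + (s * g) ^+ 2 * h by rewrite ltNge le0.
have -> : s * g * g + (s * g) ^+ 2 * h = s * (g * g) * (1 + s * h) by ring.
have gg_gt0 : 0 < g * g by rewrite lt0r mulf_neq0 //= -expr2 sqr_ge0.
have sh_gt0 : 0 < 1 + s * h by nra.
by apply: mulr_gt0 => //; apply: mulr_gt0.
Qed.

Lemma submx_orth (F : fieldType) m p (A : 'M[F]_(m, p)) (v : 'rV_p) :
  A *m v^T = 0 -> (v <= A)%MS -> v *m v^T = 0.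
Proof. by move=> Av0 /submxP[w vE]; rewrite {1}vE -mulmxA Av0 mulmx0. Qed.

Section TraceInnerProduct.
Variables (R : realType) (n : nat).
Local Notation M := 'M[R]_n.

Lemma tripE (A B : M) : trip A B = \sum_i \sum_j A i j * B i j.
Proof.
rewrite /trip /mxtrace [RHS]exchange_big /=; apply: eq_bigr => j _.
by rewrite mxE; apply: eq_bigr => i _; rewrite !mxE.
Qed.

Lemma tripDr (c A B : M) : trip c (A + B) = trip c A + trip c B.
Proof. by rewrite /trip mulmxDr mxtraceD. Qed.

Lemma tripBr (c A B : M) : trip c (A - B) = trip c A - trip c B.
Proof. by rewrite /trip mulmxBr linearB. Qed.

Lemma tripZr (c A : M) s : trip c (s *: A) = s * trip c A.
Proof. by rewrite /trip -scalemxAr mxtraceZ. Qed.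

Lemma tripC (A B : M) : trip A B = trip B A.
Proof. by rewrite /trip -mxtrace_tr trmx_mul trmxK. Qed.

Lemma trip_mxvec (A B : M) : trip A B = (mxvec A *m (mxvec B)^T) 0 0.
Proof.
rewrite tripE mxE pair_bigA /= (reindex _ (curry_mxvec_bij n n)) /=.
by apply: eq_bigr => [[i j]] _ /=; rewrite mxE !mxvecE.
Qed.

Lemma trip_self_eq0 (A : M) : trip A A = 0 -> A = 0.
Proof.
rewrite tripE => A0.
have sq_ge0 i j : 0 <= A i j * A i j by rewrite -expr2 sqr_ge0.
have rows0 := psumr_eq0P (fun i _ => sumr_ge0 _ (fun j _ => sq_ge0 i j)) A0.
apply/matrixP => i j; rewrite mxE.
have /eqP : A i j * A i j = 0 := psumr_eq0P (fun j _ => sq_ge0 i j) (rows0 i isT) isT.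
by rewrite mulf_eq0 orbb => /eqP.
Qed.

End TraceInnerProduct.

Section AffineDimension.
Variables (R : realType) (n : nat).
Local Notation M := 'M[R]_n.
Local Open Scope classical_set_scope.

Lemma has_aff_indep_sub (A B : set M) k :
  A `<=` B -> has_aff_indep A k -> has_aff_indep B k.
Proof. by move=> AB [p [pA p_free]]; exists p; split => // i; apply: AB. Qed.

Lemma has_aff_indep_leq (A : set M) k : has_aff_indep A k -> (k <= n * n)%N.
Proof. by move=> [p [_ /eqP <-]]; apply: rank_leq_col. Qed.

Lemma has_aff_indep0 (A : set M) x : A x -> has_aff_indep A 0%N.
Proof.
by move=> Ax; exists (fun=> x); split => //; rewrite /row_free -leqn0 rank_leq_row.
Qed.

Lemma leq_aff_dim (A : set M) k : has_aff_indep A k -> (k <= aff_dim A)%N.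
Proof.
move=> Ak; have k_small : (k < (n * n).+1)%N by rewrite ltnS (has_aff_indep_leq Ak).
by rewrite (_ : k = Ordinal k_small) //; apply: leq_bigmax_cond; apply/asboolP.
Qed.

Lemma has_aff_indep_aff_dim (A : set M) x : A x -> has_aff_indep A (aff_dim A).
Proof.
move=> Ax; pose P := [pred k : 'I_(n * n).+1 | `[< has_aff_indep A k >]].
have P_ord0 : ord0 \in P by rewrite inE; exact: (has_aff_indep0 Ax).
have [k Pk kE] := eq_bigmax_cond (@nat_of_ord _) (introT card_gt0P (ex_intro _ ord0 P_ord0)).
rewrite /aff_dim (eq_bigl (fun k => k \in P)) ?kE; first by move: Pk; rewrite inE.
by move=> i; rewrite inE.
Qed.

Lemma eq_aff_dim (A B : set M) :
  (forall k, has_aff_indep A k <-> has_aff_indep B k) -> aff_dim A = aff_dim B.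
Proof. by move=> AB; apply: eq_bigl => k; apply: asbool_equiv_eq. Qed.

Lemma has_aff_indep_orth_ext (A B : set M) (D : M) k :
  A `<=` B -> (forall p, A p -> B (p + D)) -> D != 0 ->
  (forall c, A c -> trip c D = 0) ->
  has_aff_indep A k -> has_aff_indep B k.+1.
Proof.
move=> AB ABD D_neq0 AD [p [pA p_free]].
(* the new point p0 + D contributes the row mxvec D, orthogonal to the old rows *)
pose q (i : 'I_k.+2) := oapp p (p ord0 + D) (unlift ord_max i).
have q_lift j : q (lift ord_max j) = p j by rewrite /q liftK.
have q0 : q ord0 = p ord0.
  by rewrite (_ : ord0 = lift ord_max ord0) ?q_lift //; apply: val_inj.
exists q; split.
  by move=> i; rewrite /q; case: unliftP => [j _|_] /=; [apply/AB/pA|apply/ABD/pA].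
set Mp := \matrix_(i < k) _ in p_free; set Mq := \matrix_(i < k.+1) _; set v := mxvec D.
have row_Mq i : row i Mq = mxvec (q (lift ord0 i) - q ord0) by rewrite rowK.
have Mp_sub : (Mp <= Mq)%MS.
  apply/row_subP => i; rewrite rowK -(q_lift (lift ord0 i)) -q0.
  have -> : lift ord_max (lift ord0 i) = lift ord0 (lift ord_max i) :> 'I_k.+2.
    by apply: val_inj; rewrite /= /bump /= add1n ltnS leqNgt ltn_ord.
  by rewrite -row_Mq row_sub.
have v_sub : (v <= Mq)%MS.
  have -> : v = row ord_max Mq.
    rewrite row_Mq q0.
    have -> : lift ord0 ord_max = ord_max :> 'I_k.+2 by apply: val_inj.
    by rewrite /q unlift_none /= addrC addKr.
  exact: row_sub.
have v_notin : ~~ (v <= Mp)%MS.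
  apply: contra D_neq0 => vMp; apply/eqP/trip_self_eq0.
  rewrite trip_mxvec (submx_orth _ vMp) ?mxE //.
  apply/row_matrixP => i; rewrite row_mul rowK row0; apply/rowP => j.
  by rewrite ord1 -trip_mxvec tripC tripBr !(tripC D) !AD ?subrr ?mxE.
have Mp_rank : \rank Mp = k by apply/eqP.
have Mpv_rank : (\rank Mp < \rank (Mp + v)%MS)%N.
  by rewrite (ltn_leqif (mxrank_leqif_sup (addsmxSl Mp v))) addsmx_sub submx_refl.
rewrite /row_free eqn_leq rank_leq_row -{1}Mp_rank.
by apply: leq_trans Mpv_rank _; apply: mxrankS; rewrite addsmx_sub Mp_sub.
Qed.

Lemma aff_dim_ltn_orth (A B : set M) (D x : M) :
  A `<=` B -> (forall p, A p -> B (p + D)) -> D != 0 ->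
  (forall c, A c -> trip c D = 0) -> A x -> (aff_dim A < aff_dim B)%N.
Proof.
move=> AB ABD D_neq0 AD Ax.
exact/leq_aff_dim/(has_aff_indep_orth_ext AB ABD D_neq0 AD)/(has_aff_indep_aff_dim Ax).
Qed.

Lemma aff_dim_ball (N E : set M) (c0 : M) r :
  N `<=` E -> (forall P s, E P -> E (s *: P)) -> 0 < r ->
  (forall P, E P -> (forall a b, `|P a b| <= r) -> N (c0 + P)) ->
  aff_dim N = aff_dim E.
Proof.
move=> NE EZ r_gt0 N_ball; apply: eq_aff_dim => k.
split; first exact: has_aff_indep_sub.
move=> [p [pE p_free]].
pose K := \sum_i \sum_a \sum_b `|p i a b|.
have entry_le i a b : `|p i a b| <= K.
  apply: (le_trans _ (sumr_ge_term i _)); last by move=> j; do 2 (apply: sumr_ge0 => ? _).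
  apply: (le_trans _ (sumr_ge_term a _)); last by move=> ?; apply: sumr_ge0.
  exact: (sumr_ge_term b (fun b => normr_ge0 _)).
have K_ge0 : 0 <= K by do 3 (apply: sumr_ge0 => ? _).
pose eps := r / (K + 1).
have eps_gt0 : 0 < eps by rewrite divr_gt0 // ltr_wpDl.
have eps_small : eps * K <= r.
  by rewrite mulrAC ler_pdivrMr ?ltr_wpDl // ler_pM2l // lerDl.
exists (fun i => c0 + eps *: p i); split.
  move=> i; apply: N_ball => [|a b]; first exact: EZ.
  rewrite mxE normrM gtr0_norm //; apply: le_trans eps_small.
  by rewrite ler_pM2l.
have -> : \matrix_(j < k) mxvec (c0 + eps *: p (lift ord0 j) - (c0 + eps *: p ord0))
    = eps *: \matrix_(j < k) mxvec (p (lift ord0 j) - p ord0).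
  apply/row_matrixP => j; rewrite rowK linearZ /= rowK.
  by rewrite opprD addrACA subrr add0r -scalerBr linearZ.
by rewrite /row_free mxrank_scale_nz // gt_eqF.
Qed.

End AffineDimension.

Section Semidefinite.
Variables (R : realType) (n : nat).
Local Notation M := 'M[R]_n.
Local Notation evec := (evec R).

Lemma symmx_entry (X : M) a b : symmx X -> X a b = X b a.
Proof. by move=> XT; rewrite -{1}XT mxE. Qed.

Lemma evec_quad (X : M) a b : ((evec a)^T *m X *m evec b) 0 0 = X a b.
Proof. by rewrite /evec trmx_delta -rowE -colE !mxE. Qed.

Lemma psdmx_quad2 (X : M) a b x y : psdmx X ->
  0 <= x * x * X a a + x * y * (X a b + X b a) + y * y * X b b.
Proof.
move=> [_ /(_ (x *: evec a + y *: evec b))].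
rewrite !mulmxDr [(_ + _)^T]linearD /= ![(_ *: _)^T]linearZ /= !mulmxDl.
rewrite -!scalemxAl -!scalemxAr ?(-scalemxAl).
rewrite ![((_ + _ : 'M[R]_1)) _ _]mxE ![((_ *: _ : 'M[R]_1)) _ _]mxE !evec_quad.
by congr (0 <= _); ring.
Qed.

Lemma psdmx_diag_ge0 (X : M) a : psdmx X -> 0 <= X a a.
Proof. by move=> /(psdmx_quad2 a a 1 0); rewrite !(mul0r, mulr0, mul1r, addr0). Qed.

Lemma trip_ekk (X : M) k : trip X (evec k *m (evec k)^T) = X k k.
Proof. by rewrite /trip mulmxA mxtrace_mulC mulmxA trace_mx11 evec_quad mxE. Qed.

Lemma psdmx_entry_norm (X : M) a b : psdmx X -> `|X a b| <= (X a a + X b b) / 2.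
Proof.
move=> psdX; have := psdmx_quad2 a b 1 1 psdX; have := psdmx_quad2 a b 1 (-1) psdX.
by rewrite (symmx_entry b a psdX.1) ler_norml => ? ?; apply/andP; split; lra.
Qed.

Lemma psdmx_entry_eq0 (X : M) a b : psdmx X -> X a a = 0 -> X a b = 0.
Proof.
move=> psdX Xaa0; suff /eqP : 2 * X a b = 0 by rewrite mulf_eq0 pnatr_eq0 => /eqP.
apply: (@linear_coef_eq0 _ _ (- X b b)) => t _.
have := psdmx_quad2 a b 1 (- t) psdX.
by rewrite Xaa0 (symmx_entry b a psdX.1); lra.
Qed.

Lemma psdmx_diag_le_tr (X : M) a : psdmx X -> X a a <= \tr X.
Proof.
by move=> psdX; apply: (sumr_ge_term (F := fun b => X b b)) => b; apply: psdmx_diag_ge0.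
Qed.

Lemma psdmx_tr_gt0 (X : M) a : psdmx X -> 0 < X a a -> 0 < \tr X.
Proof. by move=> psdX /lt_le_trans; apply; apply: psdmx_diag_le_tr. Qed.

Lemma psdmx_diag3_le_tr (X : M) a b c : psdmx X -> a != b -> a != c -> b != c ->
  X a a + X b b + X c c <= \tr X.
Proof.
move=> psdX ab ac bc; rewrite /mxtrace (bigD1 a) //= (bigD1 b) /=; last by rewrite eq_sym.
rewrite (bigD1 c) /=; last by rewrite eq_sym ac eq_sym bc.
rewrite !addrA lerDl.
by apply: sumr_ge0 => d _; apply: psdmx_diag_ge0.
Qed.

Lemma psdmx_congr (X A : M) : psdmx X -> psdmx (A^T *m X *m A).
Proof.
move=> [XT X_ge0]; split; first by rewrite /symmx !trmx_mul trmxK XT mulmxA.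
by move=> v; rewrite !mulmxA -trmx_mul -mulmxA.
Qed.

Lemma psdmx_rank1 (w : 'cV[R]_n) : psdmx (w *m w^T).
Proof.
split; first by rewrite /symmx trmx_mul trmxK.
move=> v; rewrite !mulmxA -mulmxA -[w^T *m v]trmxK trmx_mul trmxK.
set u := v^T *m w; rewrite mxE big_ord1 [u^T _ _]mxE.
by rewrite -expr2 sqr_ge0.
Qed.

End Semidefinite.

Lemma normal_cone_curve (R : realType) n (E C : set 'M[R]_n) (X L Q c : 'M[R]_n)
    (P : R -> 'M[R]_n) :
  (forall t, P t = X + t *: L + t ^+ 2 *: Q) -> \tr X = 1 ->
  (forall t, -1 < t < 1 -> 0 < \tr (P t) /\ C ((\tr (P t))^-1 *: P t)) ->
  normal_cone E C X c -> trip c L = \tr L * trip c X.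
Proof.
move=> P_def trX P_in [_ c_max]; apply/eqP; rewrite -subr_eq0; apply/eqP.
apply: (@linear_coef_eq0 _ _ (trip c Q - \tr Q * trip c X)) => t /P_in[trP_gt0 CP].
move: (c_max _ CP); rewrite tripZr ler_pdivrMl // P_def.
rewrite !mxtraceD !mxtraceZ trX !tripDr !tripZr -subr_le0.
by congr (_ <= 0); ring.
Qed.

Section Spectrahedron.
Variables (R : realType) (n : nat) (Ep Em : {set {set 'I_n}}).
Local Notation M := 'M[R]_n.
Local Notation C := (Cset Ep Em).
Local Notation S := (@symmx R n).
Local Notation ekk k := (evec R k *m (evec R k)^T).
Hypotheses (Ep2 : forall e, e \in Ep -> #|e| = 2%N) (Em2 : forall e, e \in Em -> #|e| = 2%N).

Lemma edge_neq a b : [set a; b] \in Ep :|: Em -> a != b.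
Proof. by rewrite inE => /orP[/Ep2|/Em2]; rewrite cards2; case: (a != b). Qed.

Lemma ekk_entry (k a b : 'I_n) : ekk k a b = (a == k)%:R * (b == k)%:R.
Proof. by rewrite mxE big_ord1 !mxE !andbT. Qed.

Lemma ekk_offdiag (k a b : 'I_n) : a != b -> ekk k a b = 0.
Proof.
move=> ab; rewrite ekk_entry; case: (eqVneq a k) => [ak|]; last by rewrite mul0r.
by move: ab; rewrite ak eq_sym => /negbTE->; rewrite mulr0.
Qed.

Lemma Cset_ekk (k : 'I_n) : C (ekk k).
Proof.
split; [exact: psdmx_rank1|split; [|split]].
- rewrite /mxtrace (bigD1 k) //= big1 => [|a ak]; rewrite ekk_entry ?eqxx ?mulr1 ?addr0 //.
  by rewrite (negbTE ak) mul0r.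
- by move=> a b ab; rewrite ekk_offdiag // edge_neq // inE ab.
- by move=> a b ab; rewrite ekk_offdiag // edge_neq // inE ab orbT.
Qed.

Lemma psdmx_single_diag (X : M) k : psdmx X -> \tr X = 1 ->
  (forall a, a != k -> X a a = 0) -> X = ekk k.
Proof.
move=> psdX trX X_diag; apply/matrixP => a b; rewrite ekk_entry.
case: (eqVneq a k) => [->|ak]; last by rewrite mul0r psdmx_entry_eq0 // X_diag.
case: (eqVneq b k) => [->|bk].
  by rewrite mulr1 -trX /mxtrace (bigD1 k) //= big1 ?addr0 // => a ak; apply: X_diag.
by rewrite mulr0 (symmx_entry k b psdX.1) psdmx_entry_eq0 // X_diag.
Qed.

Lemma Cset_normalize (P : M) : psdmx P -> 0 < \tr P ->
  (forall i j, [set i; j] \in Ep -> 0 <= P i j) ->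
  (forall i j, [set i; j] \in Em -> P i j <= 0) ->
  C ((\tr P)^-1 *: P).
Proof.
move=> [PT P_ge0] trP_gt0 P_Ep P_Em; have trPV_ge0 : 0 <= (\tr P)^-1 by rewrite invr_ge0 ltW.
split; [split|split; [|split]].
- by rewrite /symmx linearZ /= PT.
- by move=> v; rewrite -scalemxAr -scalemxAl mxE mulr_ge0.
- by rewrite mxtraceZ mulVf // gt_eqF.
- by move=> i j ij; rewrite mxE mulr_ge0 // P_Ep.
- by move=> i j ij; rewrite mxE mulr_ge0_le0 // P_Em.
Qed.

Lemma curve_not_vertex (X L Q : M) (P : R -> M) :
  C X -> symmx L -> L != \tr L *: X ->
  (forall t, P t = X + t *: L + t ^+ 2 *: Q) ->
  (forall t, -1 < t < 1 -> 0 < \tr (P t) /\ C ((\tr (P t))^-1 *: P t)) ->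
  ~ is_vertex S C X.
Proof.
move=> CX LT LX P_def P_in [_ dimN]; have [[XT _] [trX _]] := CX.
pose D := L - \tr L *: X.
have N_sub : (normal_cone S C X `<=` S)%classic by move=> c [].
have N0 : normal_cone S C X 0.
  by split=> [|Y _]; rewrite /symmx ?/trip trmx0 // !mul0mx.
have SD p : normal_cone S C X p -> S (p + D).
  move=> [pT _]; rewrite /symmx /D [_^T]linearD /= [(L - _)^T]linearB /=.
  by rewrite [(_ *: X)^T]linearZ /= pT LT XT.
have D_neq0 : D != 0 by rewrite subr_eq0.
have ND c : normal_cone S C X c -> trip c D = 0.
  by move=> Nc; rewrite tripBr tripZr (normal_cone_curve P_def trX P_in Nc) subrr.
by have := aff_dim_ltn_orth N_sub SD D_neq0 ND N0; rewrite dimN ltnn.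
Qed.

Lemma two_pos_diag_not_vertex (X : M) i j :
  C X -> i != j -> 0 < X i i -> 0 < X j j -> ~ is_vertex S C X.
Proof.
move=> CX ij Xii_gt0 Xjj_gt0; have [psdX [_ [X_Ep X_Em]]] := CX.
pose s t a : R := 1 + t * (a == i)%:R.
pose P t := (diag_mx (\row_a s t a))^T *m X *m diag_mx (\row_a s t a).
have P_entry t a b : P t a b = s t a * X a b * s t b.
  by rewrite /P tr_diag_mx mul_mx_diag mxE mul_diag_mx !mxE.
pose L : M := \matrix_(a, b) (X a b * ((a == i)%:R + (b == i)%:R)).
pose Q : M := \matrix_(a, b) (X a b * ((a == i)%:R * (b == i)%:R)).
have trL : \tr L = 2 * X i i.
  rewrite /mxtrace (bigD1 i) //= big1 => [|a ai]; rewrite mxE ?eqxx ?(negbTE ai).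
    by rewrite addr0 mulrC.
  by rewrite addr0 mulr0.
apply: (curve_not_vertex (L := L) (Q := Q) (P := P) CX).
- by apply/matrixP => a b; rewrite !mxE (symmx_entry a b psdX.1) addrC.
- apply/negP => /eqP/matrixP/(_ j j); rewrite !mxE trL eq_sym (negbTE ij) addr0 mulr0.
  by move=> /esym/eqP; rewrite !mulf_eq0 pnatr_eq0 !gt_eqF.
- by move=> t; apply/matrixP => a b; rewrite P_entry !mxE /s; ring.
move=> t /andP[t_gtN1 t_lt1].
have s_gt0 a : 0 < s t a by rewrite /s; case: (a == i); rewrite ?mulr1 ?mulr0; lra.
have trP_gt0 : 0 < \tr (P t).
  apply: (@psdmx_tr_gt0 _ _ _ j); first exact: psdmx_congr.
  by rewrite P_entry /s eq_sym (negbTE ij) mulr0 addr0 mul1r mulr1.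
split => //; apply: Cset_normalize => // [|a b ab|a b ab]; first exact: psdmx_congr.
  by rewrite P_entry mulr_ge0 ?mulr_ge0 ?X_Ep // ltW.
by rewrite P_entry -mulrA mulr_ge0_le0 ?mulr_le0_ge0 ?X_Em // ltW.
Qed.

Lemma nonadjacent_not_vertex (k j : 'I_n) :
  j != k -> [set k; j] \notin Ep :|: Em -> ~ is_vertex S C (ekk k).
Proof.
move=> jk kj_notin.
pose v t a : R := (a == k)%:R + t * (a == j)%:R.
pose P t := (evec R k + t *: evec R j) *m (evec R k + t *: evec R j)^T.
have P_entry t a b : P t a b = v t a * v t b by rewrite mxE big_ord1 !mxE !andbT.
pose L : M := \matrix_(a, b) ((a == k)%:R * (b == j)%:R + (a == j)%:R * (b == k)%:R).
pose Q : M := \matrix_(a, b) ((a == j)%:R * (b == j)%:R).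
have kj_diag a : (a == k)%:R * (a == j)%:R = 0 :> R.
  case: (eqVneq a k) => [->|_]; last by rewrite mul0r.
  by rewrite eq_sym (negbTE jk) mulr0.
apply: (curve_not_vertex (L := L) (Q := Q) (P := P) (Cset_ekk k)).
- by apply/matrixP => a b; rewrite !mxE; ring.
- have -> : \tr L = 0 by rewrite /mxtrace big1 // => a _; rewrite mxE kj_diag mulrC kj_diag addr0.
  rewrite scale0r; apply/eqP => /matrixP/(_ k j).
  by rewrite !mxE !eqxx (negbTE jk) mulr1 mulr0 addr0 => /eqP; rewrite oner_eq0.
- by move=> t; apply/matrixP => a b; rewrite P_entry !mxE big_ord1 !mxE !andbT /v; ring.
move=> t _.
have v_kj c : v t c != 0 -> (c == k) || (c == j).
  apply: contraR; rewrite negb_or => /andP[/negbTE ck /negbTE cj].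
  by rewrite /v ck cj mulr0 addr0.
have P_edge a b : [set a; b] \in Ep :|: Em -> P t a b = 0.
  move=> ab_in; have := edge_neq ab_in; rewrite P_entry.
  apply/contra_neq_eq; rewrite mulf_eq0 negb_or => /andP[/v_kj a_kj /v_kj b_kj].
  move: ab_in; case/orP: a_kj => /eqP->; case/orP: b_kj => /eqP-> //; rewrite ?eqxx //.
  - by move=> /(negP kj_notin).
  - by rewrite finset.setUC => /(negP kj_notin).
have trP_gt0 : 0 < \tr (P t).
  apply: (@psdmx_tr_gt0 _ _ _ k); first exact: psdmx_rank1.
  by rewrite P_entry /v eqxx eq_sym (negbTE jk) mulr0 addr0 mulr1 ltr01.
split => //; apply: Cset_normalize => // [|a b ab|a b ab]; first exact: psdmx_rank1.
  by rewrite P_edge // inE ab.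
by rewrite P_edge // inE ab orbT.
Qed.

Lemma vertex_ekk (X : M) : is_vertex S C X ->
  exists2 k, (forall j, j != k -> [set k; j] \in Ep :|: Em) & X = ekk k.
Proof.
move=> vX; have CX := vX.1; have [psdX [trX _]] := CX.
have [k /andP[_ Xkk_gt0]] : exists k, true && (0 < X k k).
  apply: psumr_neq0P => [a _|]; first exact: psdmx_diag_ge0.
  by rewrite -/(\tr X) trX; apply/eqP; rewrite oner_eq0.
have X_diag a : a != k -> X a a = 0.
  move=> ak; apply/eqP; rewrite eq_le psdmx_diag_ge0 // andbT leNgt.
  by apply/negP => Xaa_gt0; apply: (two_pos_diag_not_vertex CX ak Xaa_gt0 Xkk_gt0 vX).
have XE := psdmx_single_diag psdX trX X_diag.
exists k => // j jk; apply/negPn/negP => kj_notin.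
by apply: (nonadjacent_not_vertex jk kj_notin); rewrite -XE.
Qed.

Section FullVertex.
Variables (k : 'I_n) (k_full : forall j, j != k -> [set k; j] \in Ep :|: Em).

Definition edge_sign (j : 'I_n) : R := if [set k; j] \in Ep then -1 else 1.

(* Row k is signed against the edge constraints, so its terms are nonpositive on C; the
   diagonal weight n^2 + 1 outweighs the n^2 off-diagonal terms, each at most (1 - Y k k) / 2. *)
Definition vertex_normal : M := \matrix_(a, b)
  if a == b then (if a == k then 0 else - (n%:R ^+ 2 + 1))
  else if a == k then edge_sign b else if b == k then edge_sign a else 0.

Lemma vertex_normal_sym : symmx vertex_normal.
Proof.
apply/matrixP => a b; rewrite !mxE; case: (eqVneq a b) => [->|ab] //.
case: (eqVneq a k) => [ak|ak]; case: (eqVneq b k) => [bk|bk] //.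
by move: ab; rewrite ak bk eqxx.
Qed.

Variables (P Y : M).
Hypotheses (P_small : forall a b, `|P a b| <= 1 / 2) (CY : C Y).

Lemma edge_sign_mul_le0 j a b : j != k -> [set a; b] = [set k; j] ->
  (edge_sign j + P a b) * Y a b <= 0.
Proof.
move=> jk ab_kj; have [_ [_ [Y_Ep Y_Em]]] := CY.
have /andP[Pl Pr] : - (1 / 2) <= P a b <= 1 / 2 by rewrite -ler_norml.
have := k_full jk; rewrite /edge_sign inE -ab_kj.
case: ifP => [/Y_Ep|_ /Y_Em]; nra.
Qed.

Lemma vertex_normal_offdiag_le a b : a != b ->
  (vertex_normal + P) a b * Y a b <= (1 - Y k k) / 2.
Proof.
move=> ab; have [psdY [trY _]] := CY; rewrite !mxE (negbTE ab).
have Ykk_le1 : Y k k <= 1 by rewrite -trY psdmx_diag_le_tr.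
case: (eqVneq a k) => [ak|ak].
  have bk : b != k by rewrite -ak eq_sym.
  have := @edge_sign_mul_le0 b a b bk; rewrite ak => /(_ erefl); lra.
case: (eqVneq b k) => [bk|bk].
  have := @edge_sign_mul_le0 a a b ak; rewrite bk finset.setUC => /(_ erefl); lra.
have := psdmx_diag3_le_tr psdY ab ak bk; rewrite trY.
have := psdmx_entry_norm a b psdY; have := P_small a b.
have : P a b * Y a b <= `|P a b| * `|Y a b| by rewrite -normrM ler_norm.
have := normr_ge0 (Y a b); rewrite add0r; nra.
Qed.

Lemma vertex_normal_diag_le a : a != k ->
  (vertex_normal + P) a a * Y a a <= (1 / 2 - (n%:R ^+ 2 + 1)) * Y a a.
Proof.
move=> ak; rewrite !mxE eqxx (negbTE ak).
have := psdmx_diag_ge0 a CY.1; have := P_small a a; rewrite ler_norml; nra.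
Qed.

Lemma vertex_normal_max :
  trip (vertex_normal + P) Y <= trip (vertex_normal + P) (ekk k).
Proof.
have [psdY [trY _]] := CY; set c := vertex_normal + P.
have Ykk_le1 : Y k k <= 1 by rewrite -trY psdmx_diag_le_tr.
have rest : \sum_(a | a != k) Y a a = 1 - Y k k.
  by rewrite -trY /mxtrace [in RHS](bigD1 k) //= addrAC subrr add0r.
have diag_le : \sum_a c a a * Y a a <=
    P k k * Y k k + (1 / 2 - (n%:R ^+ 2 + 1)) * (1 - Y k k).
  rewrite (bigD1 k) //= !mxE eqxx add0r lerD2l -rest mulr_sumr.
  by apply: ler_sum => a; apply: vertex_normal_diag_le.
have B_ge0 : 0 <= (1 - Y k k) / 2 by lra.
rewrite trip_ekk tripE.
apply: le_trans (sum_offdiag_le B_ge0 vertex_normal_offdiag_le) _.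
have := P_small k k; rewrite ler_norml => /andP[Pkk_ge Pkk_le].
have n2_ge0 : 0 <= n%:R ^+ 2 :> R by rewrite sqr_ge0.
rewrite !mxE eqxx add0r; move: diag_le; nra.
Qed.

End FullVertex.

Lemma full_vertex k : (forall j, j != k -> [set k; j] \in Ep :|: Em) ->
  is_vertex S C (ekk k).
Proof.
move=> k_full; split; first exact: Cset_ekk.
apply: (@aff_dim_ball _ _ _ _ (vertex_normal k) (1 / 2)).
- by move=> c [].
- by move=> P s PT; rewrite /symmx linearZ /= PT.
- by rewrite divr_gt0.
move=> P PT P_small; split.
  by rewrite /symmx [_^T]linearD /= vertex_normal_sym PT.
by move=> Y CY; apply: vertex_normal_max.
Qed.

End Spectrahedron.

Lemma deg_card_nbr n (E : {set {set 'I_n}}) k : (forall e, e \in E -> #|e| = 2%N) ->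
  deg E k = #|[set j | [set k; j] \in E]|.
Proof.
move=> E2; rewrite /deg; set N := [set j | [set k; j] \in E].
have -> : [set e in E | k \in e] = [set [set k; j] | j in N].
  apply/finset.setP => e; rewrite inE; apply/andP/imsetP => [[eE ke]|[j jN ->]].
    have /eqP/cards2P[x [y [_ exy]]] := E2 e eE.
    move: ke eE; rewrite exy !inE => /orP[]/eqP <- xy_in; first by exists y; rewrite ?inE.
    by exists x; rewrite ?inE finset.setUC.
  by rewrite inE in jN; rewrite !inE eqxx.
rewrite card_in_imset // => j1 j2; rewrite !inE => /E2 + _ /finset.setP/(_ j1).
by rewrite !inE eqxx orbT => + /esym/orP[/eqP j1k|/eqP //]; rewrite j1k finset.setUid cards1.
Qed.

Lemma deg_full n (E : {set {set 'I_n}}) k : (forall e, e \in E -> #|e| = 2%N) ->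
  deg E k = n.-1 <-> (forall j, j != k -> [set k; j] \in E).
Proof.
move=> E2; rewrite deg_card_nbr // -[n in n.-1]card_ord -(cardsC1 k).
set N := [set j | [set k; j] \in E].
have kk_notin : [set k; k] \notin E by rewrite finset.setUid; apply/negP => /E2; rewrite cards1.
have N_sub : N \subset [set~ k].
  by apply/fintype.subsetP => j; rewrite !inE; apply: contraTneq => ->.
split => [N_card j jk|N_full].
  have /eqP/finset.setP/(_ j) : N == [set~ k] by rewrite eqEcard N_sub N_card /=.
  by rewrite !inE jk.
suff -> : N = [set~ k] by [].
apply/finset.setP => j; rewrite !inE.
by case: (eqVneq j k) => [->|/N_full //]; apply/negbTE.
Qed.

Theorem theorem3p6 (R : realType) (n : nat) (Ep Em : {set {set 'I_n}})
  (hEp : forall e, e \in Ep -> #|e| = 2%N)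
  (hEm : forall e, e \in Em -> #|e| = 2%N) :
  forall X : 'M[R]_n,
    is_vertex (@symmx R n) (Cset Ep Em) X <->
    exists k : 'I_n, deg (Ep :|: Em) k = n.-1 /\ X = evec R k *m (evec R k)^T.
Proof.
have E2 e : e \in Ep :|: Em -> #|e| = 2%N by rewrite inE => /orP[/hEp|/hEm].
move=> X; split => [/(vertex_ekk hEp hEm) [k k_full ->]|[k [k_deg ->]]].
  by exists k; split => //; apply/(deg_full k E2).
by apply: full_vertex => //; apply/(deg_full k E2).
Qed.
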